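(* Consider the finite game with players $\mathcal{M}=\{1,\dots,M\}$, common action set $\mathcal{N}$ and costs $c_i(\mathbf{a}) = \frac{\sigma^2}{h_{ia_i}}\,\frac{\beta_i}{[1-\sum_{l\in\mathcal{M}_{a_i}(\mathbf{a})}\beta_l]^+}$. If this game contains no best response cycles, then the algorithm MAPC$^\ast$, started from any initial association profile, converges in a finite number of steps (i.e., after finitely many steps the association profile no longer changes).
   Context: Uplink cellular model: mobiles $\mathcal{M}=\{1,\dots,M\}$, BSs $\mathcal{N}=\{1,\dots,N\}$, power gains $h_{ij}>0$, noise power $\sigma^2>0$, target SINRs $\gamma_i>0$, $\beta_i=\gamma_i/(1+\gamma_i)$. Association profile $\mathbf{a}\in\mathcal{N}^M$, $\mathcal{M}_j(\mathbf{a})=\{l: a_l=j\}$, $[x]^+=\max(x,0)$, positive$/0=+\infty$; $(b,\mathbf{a}_{-i})$ replaces $a_i$ by $b$. A best response path is a sequence of profiles $\mathbf{a}^1,\dots,\mathbf{a}^k$ where each $\mathbf{a}^{r+1}=(b,\mathbf{a}^r_{-i})$ for some player $i$ and some $b\in\arg\min_{b'\in\mathcal{N}}c_i(b',\mathbf{a}^r_{-i})$; a best response cycle is such a path with $\mathbf{a}^1=\mathbf{a}^k$ in which, for at least one step, the deviating player strictly decreases its cost. Algorithm MAPC$^\ast$: at times $t=0,1,2,\dots$, mobile $i=1+(t\bmod M)$ changes its association at $t+1$ iff $a_i(t)\notin\arg\min_{j\in\mathcal{N}}\big(c_i(j,\mathbf{a}(t)_{-i}),\ \sum_{l\in\mathcal{M}_j((j,\mathbf{a}(t)_{-i}))}\beta_l\big)$,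 the minimization being with respect to lexicographic order on pairs; in that case $a_i(t+1)$ is chosen in this lexicographic argmin and all other associations are unchanged. *)

From HB Require Import structures.
From mathcomp Require Import all_boot all_order all_algebra.
From mathcomp Require Import constructive_ereal.
Set Implicit Arguments. Unset Strict Implicit. Unset Printing Implicit Defensive.
Import Order.TTheory GRing.Theory Num.Theory.
Local Open Scope ring_scope.

(* Players are 'I_M (player i+1 of the paper is ordinal i), base stations 'I_N. *)
Definition profile (M N : nat) := 'I_M -> 'I_N.

Definition upd M N (a : profile M N) (i : 'I_M) (b : 'I_N) : profile M N :=
  fun l => if l == i then b else a l.

Section Game.
Variables (R : realFieldType) (M N : nat).
Variables (h : 'I_M -> 'I_N -> R) (sigma2 : R) (gamma : 'I_M -> R).

Definition beta (i : 'I_M) : R := gamma i / (1 + gamma i).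

Definition load (a : profile M N) (j : 'I_N) : R :=
  \sum_(l < M | a l == j) beta l.

Definition cost (i : 'I_M) (a : profile M N) : \bar R :=
  let d := Num.max (1 - load a (a i)) 0 in
  if 0 < d then ((sigma2 / h i (a i)) * beta i / d)%:E else +oo%E.

Definition best_response (i : 'I_M) (a : profile M N) (b : 'I_N) : Prop :=
  forall b' : 'I_N, (cost i (upd a i b) <= cost i (upd a i b'))%E.

Definition br_step (i : 'I_M) (a a' : profile M N) : Prop :=
  exists2 b, best_response i a b & a' = upd a i b.

(* best response cycle a^1,...,a^k = P 0, ..., P n (n = k-1), P 0 = P n,
   with a strict cost decrease for the deviating player at some step *)
Definition has_br_cycle : Prop :=
  exists (n : nat) (P : nat -> profile M N) (I : nat -> 'I_M),
    [/\ P 0%N = P n,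
        (forall r, (r < n)%N -> br_step (I r) (P r) (P r.+1)) &
        exists2 r, (r < n)%N & (cost (I r) (P r.+1) < cost (I r) (P r))%E].

Definition lex_le (x y : \bar R * R) : bool :=
  (x.1 < y.1)%E || ((x.1 == y.1) && (x.2 <= y.2)).

Definition mapc_key (i : 'I_M) (a : profile M N) (j : 'I_N) : \bar R * R :=
  (cost i (upd a i j), load (upd a i j) j).

Definition in_lex_argmin (i : 'I_M) (a : profile M N) (j : 'I_N) : bool :=
  [forall j' : 'I_N, lex_le (mapc_key i a j) (mapc_key i a j')].

(* a : nat -> profile is a run of MAPC*: at time t the player with index
   t mod M (paper: 1 + (t mod M)) updates. *)
Definition mapc_run (a : nat -> profile M N) : Prop :=
  forall (t : nat) (i : 'I_M), nat_of_ord i = (t %% M)%N ->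
    if in_lex_argmin i (a t) (a t i) then a t.+1 = a t
    else exists2 b, in_lex_argmin i (a t) b & a t.+1 = upd (a t) i b.

End Game.

From mathcomp Require Import all_boot all_order all_algebra.
From mathcomp Require Import constructive_ereal.
From mathcomp Require Import lra.
From Stdlib Require Import Classical FunctionalExtensionality.
Import Order.TTheory GRing.Theory Num.Theory.
Local Open Scope ring_scope.
Set Implicit Arguments. Unset Strict Implicit.

(* Every MAPC* move is a best response of the mover, since the lexicographic
   argmin minimises the cost first. A move that changes the profile without
   lowering the mover's cost takes it to a station whose load (counting the
   mover) is strictly smaller than that of the station it leaves, hence strictly
   decreases the potential \sum_j load_j^2.
   So if a profile were left and later revisited, the segment in between would
   be a best response path returning to its start; with no strict cost decrease
   on it the potential would strictly drop along it, which is absurd. Hence it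
   is a best response cycle, and without such cycles no profile is left twice:
   there are finitely many profiles, so the run stabilises. *)

Section Profiles.
Variables M N : nat.

Lemma upd_id (a : profile M N) i : upd a i (a i) = a.
Proof. by apply: functional_extensionality => l; rewrite /upd; case: eqP => [->|]. Qed.

Lemma upd_same (a : profile M N) i b : upd a i b i = b.
Proof. by rewrite /upd eqxx. Qed.

Lemma finfun_profile_inj : injective (fun a : profile M N => finfun a).
Proof.
move=> a b /ffunP eq_ab; apply: functional_extensionality => l.
by have := eq_ab l; rewrite !ffunE.
Qed.

End Profiles.

Section Potential.
Variables (R : realFieldType) (M N : nat) (gamma : 'I_M -> R).

Lemma beta_gt0 i : 0 < gamma i -> 0 < beta gamma i.
Proof. by move=> gt0; rewrite divr_gt0 // addr_gt0. Qed.

Definition load_without (a : profile M N) i j :=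
  \sum_(l < M | l != i) (if a l == j then beta gamma l else 0).

Lemma load_withoutE (a : profile M N) i j :
  load gamma a j = (if a i == j then beta gamma i else 0) + load_without a i j.
Proof. by rewrite /load big_mkcond (bigD1 i). Qed.

Lemma load_without_upd (a : profile M N) i b j :
  load_without (upd a i b) i j = load_without a i j.
Proof. by apply: eq_bigr => l /negbTE; rewrite /upd => ->. Qed.

Lemma load_upd_other (a : profile M N) i b j :
  j != a i -> j != b -> load gamma (upd a i b) j = load gamma a j.
Proof.
move=> ji jb; rewrite !(load_withoutE _ i) upd_same load_without_upd.
by rewrite ![_ == j]eq_sym (negbTE ji) (negbTE jb).
Qed.

Definition potential (a : profile M N) := \sum_(j < N) load gamma a j ^+ 2.

(* Writing y_j for the load of j without player i, moving i from c to b changes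
   the potential by 2 beta_i (y_b - y_c). *)
Lemma potential_upd_lt (a : profile M N) i b : 0 < beta gamma i ->
  load gamma (upd a i b) b < load gamma a (a i) -> potential (upd a i b) < potential a.
Proof.
set c := a i => beta_gt0 load_lt.
have bc : b != c by apply: contraTneq load_lt => ->; rewrite upd_id ltxx.
have potentialE a' : potential a' = load gamma a' c ^+ 2 + load gamma a' b ^+ 2 +
    \sum_(j < N | (j != c) && (j != b)) load gamma a' j ^+ 2.
  by rewrite /potential (bigD1 c) //= (bigD1 b) //= addrA.
rewrite !potentialE; under eq_bigr => j /andP[jc jb].
  by rewrite load_upd_other //; over.
rewrite ltrD2r.
move: load_lt; rewrite !(load_withoutE _ i) !upd_same !load_without_upd -/c.
rewrite !eqxx (negbTE bc) eq_sym (negbTE bc) !add0r.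
move: (load_without a i b) (load_without a i c) => yb yc; nra.
Qed.

End Potential.

Lemma lex_le_nle_snd_lt (R : realFieldType) (x y z : \bar R * R) :
  lex_le x z -> ~~ lex_le y z -> x.1 = y.1 -> x.2 < y.2.
Proof.
case: x y z => [x1 x2] [y1 y2] [z1 z2]; rewrite /lex_le /= => le_xz + eq1.
rewrite -eq1 negb_or negb_and -ltNge; case/orP: le_xz => [-> //|/andP[-> le_xz]].
by move=> /andP[_ /(le_lt_trans le_xz)].
Qed.

Section BestResponse.
Variables (R : realFieldType) (M N : nat).
Variables (h : 'I_M -> 'I_N -> R) (sigma2 : R) (gamma : 'I_M -> R).

Lemma lex_argmin_best_response i (a : profile M N) b :
  in_lex_argmin h sigma2 gamma i a b -> best_response h sigma2 gamma i a b.
Proof.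
move=> /forallP lex_min b'; have := lex_min b'; rewrite /lex_le /mapc_key /=.
by case/orP => [/ltW | /andP[/eqP -> _]].
Qed.

Lemma br_step_cost_le i (a a' : profile M N) :
  br_step h sigma2 gamma i a a' -> (cost h sigma2 gamma i a' <= cost h sigma2 gamma i a)%E.
Proof. by case=> b br ->; rewrite -{2}(upd_id a i). Qed.

End BestResponse.

Lemma const_from_stationary (T : Type) (x : nat -> T) t :
  (forall r, (t <= r)%N -> x r.+1 = x r) -> forall s, (t <= s)%N -> x s = x t.
Proof.
move=> stable s /subnKC <-; elim: (s - t)%N => [|k IH]; first by rewrite addn0.
by rewrite addnS stable ?leq_addr.
Qed.

Lemma no_return_eventually_const (T : finType) (x : nat -> T) :
  (forall t s, (t < s)%N -> x t.+1 != x t -> x s != x t) ->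
  exists t0, forall t, (t0 <= t)%N -> x t = x t0.
Proof.
move=> no_return.
suff: forall (S : {set T}) t, (forall s, (t <= s)%N -> x s \in S) ->
    exists t0, forall t, (t0 <= t)%N -> x t = x t0.
  by move=> /(_ setT 0%N); apply=> s _; rewrite in_setT.
move=> S; have [n] := ubnP #|S|; elim: n S => // n IH S /ltnSE S_le t inS.
have [[r [tr moved]] | stable] :=
  classic (exists r, (t <= r)%N /\ x r.+1 != x r); last first.
  exists t; apply: const_from_stationary => r tr; apply: NNPP => moved.
  by apply: stable; exists r; split; last exact/eqP.
apply: (IH (S :\ x r) _ r.+1) => [|s rs].
  by apply: leq_trans S_le; rewrite (cardsD1 (x r) S) inS.
by rewrite !inE no_return //= inS // (leq_trans tr) // ltnW.
Qed.

Section MapcRun.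
Variables (R : realFieldType) (M N : nat).
Variables (h : 'I_M -> 'I_N -> R) (sigma2 : R) (gamma : 'I_M -> R).
Hypothesis gamma_gt0 : forall i, 0 < gamma i.
Hypothesis M_gt0 : (0 < M)%N.
Variable a : nat -> profile M N.
Hypothesis run : mapc_run h sigma2 gamma a.

Definition mover t : 'I_M := Ordinal (ltn_pmod t M_gt0).

Local Notation mover_cost t := (cost h sigma2 gamma (mover t)).

Lemma mapc_br_step t : br_step h sigma2 gamma (mover t) (a t) (a t.+1).
Proof.
have := @run t (mover t) erefl; case: ifP => [lex_min -> | _ [b lex_min ->]].
  by exists (a t (mover t)); [exact: lex_argmin_best_response | rewrite upd_id].
by exists b => //; exact: lex_argmin_best_response.
Qed.

Lemma mapc_potential_lt t :
  mover_cost t (a t.+1) = mover_cost t (a t) -> a t.+1 <> a t ->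
  potential gamma (a t.+1) < potential gamma (a t).
Proof.
set i := mover t => eq_cost moved.
have := @run t i erefl.
case: ifP => [_ /moved // | /negbT /forallPn[j not_le] [b lex_min a_next]].
rewrite a_next; apply: potential_upd_lt; first exact: beta_gt0.
have := lex_le_nle_snd_lt (forallP lex_min j) not_le.
rewrite /mapc_key /= upd_id -a_next; apply; exact: eq_cost.
Qed.

Lemma mapc_potential_le t s : (t <= s)%N ->
  (forall r, (t <= r < s)%N -> mover_cost r (a r.+1) = mover_cost r (a r)) ->
  potential gamma (a s) <= potential gamma (a t).
Proof.
elim: s => [|s IH]; first by rewrite leqn0 => /eqP ->.
rewrite leq_eqVlt => /orP[/eqP -> // | lt_ts] eq_cost.
apply: le_trans (IH lt_ts _) => [|r /andP[tr rs]]; last first.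
  by apply: eq_cost; rewrite tr (leqW rs).
have [-> // | moved] := classic (a s.+1 = a s).
apply/ltW/mapc_potential_lt; last exact: moved.
by apply: eq_cost; rewrite -ltnS lt_ts /=.
Qed.

Lemma mapc_revisit_br_cycle t1 t2 : (t1 < t2)%N -> a t2 = a t1 -> a t1.+1 <> a t1 ->
  has_br_cycle h sigma2 gamma.
Proof.
move=> lt12 back moved.
exists (t2 - t1)%N, (fun r => a (t1 + r)%N), (fun r => mover (t1 + r)).
split=> [|r _|]; first by rewrite addn0 (subnKC (ltnW lt12)) back.
  by rewrite addnS; exact: mapc_br_step.
apply: NNPP => no_strict.
have eq_cost r : (t1 <= r < t2)%N -> mover_cost r (a r.+1) = mover_cost r (a r).
  case/andP=> t1r rt2; apply/eqP; rewrite eq_le br_step_cost_le; last exact: mapc_br_step.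
  rewrite /= leNgt; apply/negP => lt_cost; apply: no_strict.
  exists (r - t1)%N; first by rewrite ltn_sub2r.
  by rewrite addnS subnKC; first exact: lt_cost.
suff: potential gamma (a t2) < potential gamma (a t1) by rewrite back ltxx.
apply: le_lt_trans (mapc_potential_le lt12 _) (mapc_potential_lt (eq_cost t1 _) moved).
- by move=> r /andP[t1r rt2]; apply: eq_cost; rewrite (ltnW t1r).
- by rewrite leqnn lt12.
Qed.

End MapcRun.

Theorem proposition3 (R : realFieldType) (M N : nat)
    (h : 'I_M -> 'I_N -> R) (sigma2 : R) (gamma : 'I_M -> R) :
  (forall i j, 0 < h i j) -> 0 < sigma2 -> (forall i, 0 < gamma i) ->
  ~ has_br_cycle h sigma2 gamma ->
  forall a : nat -> profile M N, mapc_run h sigma2 gamma a ->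
  exists T : nat, forall t : nat, (T <= t)%N -> a t = a T.
Proof.
move=> _ _ gamma_gt0 no_cycle a run.
have [M0 | M_gt0] := posnP M.
  exists 0%N => t _; apply: functional_extensionality => i.
  by have := ltn_ord i; rewrite {2}M0.
pose x t := finfun (a t).
have no_return t s : (t < s)%N -> x t.+1 != x t -> x s != x t.
  move=> lt_ts /eqP moved; apply/eqP => /finfun_profile_inj back.
  apply: no_cycle; apply: (mapc_revisit_br_cycle gamma_gt0 M_gt0 run lt_ts back).
  by move=> eq_next; apply: moved; rewrite /x eq_next.
have [T constT] := no_return_eventually_const no_return.
by exists T => t /constT /finfun_profile_inj.
Qed.
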